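(* Let $A\in\mathbb{R}^{r\times n}$, let $f:\mathbb{R}^r\to\mathbb{R}$ be convex, and let $\mathcal{X}\subseteq\mathbb{R}^n$ be any set such that the problem $\max\{f(Ax): x\in\mathcal{X}\}$ has a nonempty set of global optimizers. Then there exists $c\in\mathbb{R}^r$ such that the linear problem $\max_{x\in\mathcal{X}} c^\top Ax$ admits an optimal solution, and every optimal solution of this linear problem is also an optimal solution of $\max\{f(Ax): x\in\mathcal{X}\}$. *)

From mathcomp Require Import all_boot all_order all_algebra.
From mathcomp Require Import reals.
Set Implicit Arguments. Unset Strict Implicit. Unset Printing Implicit Defensive.
Import Order.TTheory GRing.Theory Num.Theory.
Local Open Scope ring_scope.

Definition convex_fun (R : realType) (r : nat) (f : 'cV[R]_r -> R) : Prop :=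
  forall (x y : 'cV[R]_r) (t : R), 0 <= t -> t <= 1 ->
    f (t *: x + (1 - t) *: y) <= t * f x + (1 - t) * f y.

Definition is_maximizer (R : realType) (n : nat) (X : 'cV[R]_n -> Prop)
  (g : 'cV[R]_n -> R) (x : 'cV[R]_n) : Prop :=
  X x /\ forall y, X y -> g y <= g x.

Definition lin_obj (R : realType) (r n : nat) (c : 'cV[R]_r) (A : 'M[R]_(r, n))
  (x : 'cV[R]_n) : R := (c^T *m A *m x) 0 0.

(* A finite convex function on R^r has a subgradient at every point. At the
   image y = A x* of a maximizer, a subgradient c gives
   f (A x) >= f y + c^T (A x - y): hence no feasible x beats x* for c^T A x,
   and any x maximizing c^T A x satisfies c^T (A x - y) >= 0, so f (A x) >= f y.
   Subgradients are built coordinate by coordinate, as in the proof of the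
   Hahn-Banach theorem: a functional dominated by g on a convex set P through 0
   extends to P + R e, the new value on e being the supremum of the slopes of
   g to the left of P. *)
From mathcomp Require Import all_boot all_order all_algebra.
From mathcomp Require Import classical_sets reals.
From mathcomp Require Import ring lra.
Set Implicit Arguments. Unset Strict Implicit. Unset Printing Implicit Defensive.
Import Order.TTheory GRing.Theory Num.Theory.
Local Open Scope ring_scope.
Local Open Scope classical_set_scope.

Definition dot (R : realType) (r : nat) (c d : 'cV[R]_r) : R := (c^T *m d) 0 0.

Section Dot.
Variables (R : realType) (r : nat).
Implicit Types (c d u v : 'cV[R]_r) (a : R).

Lemma dot0r c : dot c 0 = 0.
Proof. by rewrite /dot mulmx0 mxE. Qed.

Lemma dotDr c u v : dot c (u + v) = dot c u + dot c v.
Proof. by rewrite /dot mulmxDr mxE. Qed.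

Lemma dotZr c u a : dot c (a *: u) = a * dot c u.
Proof. by rewrite /dot -scalemxAr mxE. Qed.

Lemma dotBr c u v : dot c (u - v) = dot c u - dot c v.
Proof. by rewrite -scaleN1r dotDr dotZr mulN1r. Qed.

Lemma dotDl c d u : dot (c + d) u = dot c u + dot d u.
Proof. by rewrite /dot linearD /= mulmxDl mxE. Qed.

Lemma dotZl c u a : dot (a *: c) u = a * dot c u.
Proof. by rewrite /dot linearZ /= -scalemxAl mxE. Qed.

Lemma dot_deltal (i : 'I_r) d : dot (delta_mx i 0) d = d i 0.
Proof. by rewrite /dot trmx_delta -rowE mxE. Qed.

End Dot.

Lemma convex_fun_shift (R : realType) (r : nat) (f : 'cV[R]_r -> R) y b :
  convex_fun f -> convex_fun (fun d => f (y + d) - b).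
Proof.
move=> f_convex x z t t0 t1.
have -> : y + (t *: x + (1 - t) *: z) = t *: (y + x) + (1 - t) *: (y + z).
  by apply/matrixP => i j; rewrite !mxE; ring.
by have := f_convex (y + x) (y + z) t t0 t1; lra.
Qed.

Section ExtendDirection.
Variables (R : realType) (r : nat) (g : 'cV[R]_r -> R) (c e : 'cV[R]_r).
Variable P : 'cV[R]_r -> Prop.
Hypothesis g_convex : convex_fun g.
Hypothesis P0 : P 0.
Hypothesis P_convex :
  forall u v q, P u -> P v -> 0 <= q -> q <= 1 -> P (q *: u + (1 - q) *: v).
Hypothesis c_le_g : forall u, P u -> dot c u <= g u.

Lemma slope_left_le_right u v s t : P u -> P v -> 0 < s -> 0 < t ->
  (dot c u - g (u - s *: e)) / s <= (g (v + t *: e) - dot c v) / t.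
Proof.
move=> Pu Pv s0 t0; have st0 : 0 < s + t by lra.
set q := t / (s + t).
have q0 : 0 <= q by rewrite divr_ge0 ?ltW.
have q1 : q <= 1 by rewrite ler_pdivrMr // mul1r; lra.
have q' : 1 - q = s / (s + t) by rewrite /q; field; lra.
(* the convex combination with weights q, 1 - q cancels the e-components *)
have mid : q *: (u - s *: e) + (1 - q) *: (v + t *: e) = q *: u + (1 - q) *: v.
  by apply/matrixP => i j; rewrite q' !mxE /q; field; lra.
have := g_convex (u - s *: e) (v + t *: e) q0 q1; rewrite mid.
have := c_le_g (P_convex Pu Pv q0 q1); rewrite dotDr !dotZr q' /q => le1 le2.
have /(ler_wpM2l (ltW st0)) := le_trans le1 le2.
have clear_den x y : (s + t) * (t / (s + t) * x + s / (s + t) * y) = t * x + s * y.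
  by field; lra.
rewrite !clear_den => le3.
by rewrite ler_pdivrMr // mulrAC ler_pdivlMr //; lra.
Qed.

Lemma extend_direction :
  exists a, forall u t, P u -> dot c u + t * a <= g (u + t *: e).
Proof.
pose L := [set x : R | exists u s, [/\ P u, 0 < s & x = (dot c u - g (u - s *: e)) / s]].
have L_ub v t : P v -> 0 < t -> ubound L ((g (v + t *: e) - dot c v) / t).
  by move=> Pv t0 _ [u [s [Pu s0 ->]]]; exact: slope_left_le_right.
have L_n0 : L !=set0 by exists ((dot c 0 - g (0 - 1 *: e)) / 1), 0, 1.
have L_sup : has_sup L by split => //; exists ((g (0 + 1 *: e) - dot c 0) / 1); apply: L_ub.
exists (sup L) => u t Pu.
have [t0|t0|->] := ltgtP t 0.
- have nt0 : 0 < - t by lra.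
  have Lu : L ((dot c u - g (u - (- t) *: e)) / (- t)) by exists u, (- t).
  have := sup_upper_bound L_sup Lu; rewrite scaleNr opprK ler_pdivrMr //; lra.
- by have := ge_sup L_n0 (L_ub u t Pu t0); rewrite ler_pdivlMr //; lra.
- by rewrite mul0r addr0 scale0r addr0; exact: c_le_g.
Qed.

End ExtendDirection.

Definition supported_below (R : realType) (r k : nat) (d : 'cV[R]_r) : Prop :=
  forall i : 'I_r, (k <= i)%N -> d i 0 = 0.

Lemma supported_below_comb (R : realType) (r k : nat) (u v : 'cV[R]_r) a b :
  supported_below k u -> supported_below k v ->
  supported_below k (a *: u + b *: v).
Proof. by move=> Su Sv i ki; rewrite !mxE Su // Sv // !mulr0 addr0. Qed.

Lemma supported_belowS (R : realType) (r k : nat) (kr : (k < r)%N) (d : 'cV[R]_r) :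
  supported_below k.+1 d ->
  supported_below k (d - d (Ordinal kr) 0 *: delta_mx (Ordinal kr) 0).
Proof.
move=> Sd i ki; rewrite !mxE.
have [->|ne] := eqVneq i (Ordinal kr); first by rewrite !eqxx mulr1 subrr.
have /Sd -> : (k < i)%N.
  by rewrite ltn_neqAle ki andbT; apply: contra ne => /eqP ik; apply/eqP/val_inj.
by rewrite mulr0 subr0.
Qed.

Lemma subgradient0_supported (R : realType) (r : nat) (g : 'cV[R]_r -> R) :
  convex_fun g -> g 0 = 0 -> forall k, (k <= r)%N ->
  exists c, forall d, supported_below k d -> dot c d <= g d.
Proof.
move=> g_convex g0; elim=> [|k IHk] kr.
  exists 0 => d Sd.
  have -> : d = 0 by apply/matrixP => i j; rewrite (ord1 j) mxE Sd.
  by rewrite dot0r g0.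
have [c c_le_g] := IHk (ltnW kr).
pose e : 'cV[R]_r := delta_mx (Ordinal kr) 0.
have S0 : supported_below k (0 : 'cV[R]_r) by move=> i _; rewrite mxE.
have [a le_g] := extend_direction e g_convex S0
  (fun u v q Su Sv _ _ => supported_below_comb q (1 - q) Su Sv) c_le_g.
exists (c + (a - dot c e) *: e) => d Sd.
set t := d (Ordinal kr) 0.
have dE : d = (d - t *: e) + t *: e by rewrite subrK.
have := le_g _ t (supported_belowS kr Sd); rewrite -dE => le_d.
by rewrite dotDl dotZl dot_deltal -/t {1}dE dotDr dotZr; lra.
Qed.

Lemma convex_subgradient (R : realType) (r : nat) (f : 'cV[R]_r -> R) y :
  convex_fun f -> exists c, forall z, f y + dot c (z - y) <= f z.
Proof.
move=> f_convex.
have [|c le_g] := subgradient0_supported (convex_fun_shift y (f y) f_convex) _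
  (leqnn r); first by rewrite addr0 subrr.
exists c => z.
have all_supported : supported_below r (z - y).
  by move=> i; rewrite leqNgt ltn_ord.
by have := le_g _ all_supported; rewrite subrKC; lra.
Qed.

Theorem proposition5 (R : realType) (r n : nat) (A : 'M[R]_(r, n))
  (f : 'cV[R]_r -> R) (X : 'cV[R]_n -> Prop) :
  convex_fun f ->
  (exists x, is_maximizer X (fun z => f (A *m z)) x) ->
  exists c : 'cV[R]_r,
    (exists x, is_maximizer X (lin_obj c A) x) /\
    (forall x, is_maximizer X (lin_obj c A) x ->
               is_maximizer X (fun z => f (A *m z)) x).
Proof.
move=> f_convex [xs [Xxs xs_max]].
have [c subgrad] := convex_subgradient (A *m xs) f_convex.
have lin_objE x : lin_obj c A x = dot c (A *m x) by rewrite /lin_obj /dot mulmxA.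
exists c; split.
  exists xs; split=> // y Xy; rewrite !lin_objE.
  by have := subgrad (A *m y); have := xs_max y Xy; rewrite dotBr /=; lra.
move=> x [Xx x_max]; split=> // y Xy /=.
have := x_max xs Xxs; have := subgrad (A *m x); have := xs_max y Xy.
by rewrite !lin_objE dotBr /=; lra.
Qed.
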